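(* Let $M\ge4$. If a coarsely bottlenecked graph $G$ has a skeleton $G_{\lambda,k}$ such that $G_{(\lambda,k)_{(2,2)}}$ contains an $M$-fat $H$ minor, then $G_{\lambda,k}$ contains an $(M+\frac M2-2)$-fat $H$ minor.
   Context: All graphs are connected (and unbounded); $d$ is the graph metric. Sets $X,Y$ are $r$-disjoint if $d(a,b)>r$ for all $a\in X,b\in Y$; $X$ is $k$-connected if any two of its points are joined by a finite sequence in $X$ with consecutive distances $\le k$; $N_r(S)=\{y:d(s,y)<r\text{ for some }s\in S\}$. $G$ is $M$-fat $n$-bottlenecked if for any two connected $M$-disjoint subgraphs $X,Y$ there is $S\subset V(G)\setminus(V(X)\cup V(Y))$, $|S|=n$, such that every path from $X$ to $Y$ meets $N_M(S)$; coarsely bottlenecked means this holds for some $M,n$. $H$ is an $M$-fat minor of a graph $\Gamma$ if there are connected subgraphs $B_v$ ($v\in V(H)$) and paths $P_e$ ($e\in E(H)$), $P_e$ joining $B_u$ to $B_v$ for $e=uv$, any two of which are $M$-disjoint unless they correspond to an incident vertex–edge pair of $H$. Skeleton $\Gamma_{\lambda,k}$ of a connected graph $\Gamma$ (root $x_0$, scale $\lambda\ge1$, connectivity $k\ge1$): layers $A_{N,\lambda}=\{x: N\lambda<d(x,x_0)\le(N+1)\lambda\}$, $N\in\mathbb Z$; blocks are maximal $k$-connected subsets of layers; $\Gamma_{\lambda,k}$ has a vertex per block and an edge between two blocks iff an edge of $\Gamma$ joins them. $G_{(\lambda,k)_{(2,2)}}$ is the $(2,2)$-skeleton of the graph $G_{\lambda,k}$,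 rooted at the block containing the root of $G$. *)

From Stdlib Require Import Reals List ZArith.
Import ListNotations.
Open Scope R_scope.

Record Graph := mkGraph { vtx : Type; adj : vtx -> vtx -> Prop }.

Fixpoint chain {T : Type} (Rel : T -> T -> Prop) (x : T) (l : list T) : Prop :=
  match l with
  | nil => True
  | y :: l' => Rel x y /\ chain Rel y l'
  end.

Definition walk_n (g : Graph) (x y : vtx g) (n : nat) : Prop :=
  exists l, chain (adj g) x l /\ length l = n /\ last l x = y.

Definition is_dist (g : Graph) (x y : vtx g) (n : nat) : Prop :=
  walk_n g x y n /\ forall m, walk_n g x y m -> (n <= m)%nat.

Definition dist_gt (g : Graph) (x y : vtx g) (r : R) : Prop :=
  exists n, is_dist g x y n /\ r < INR n.
Definition dist_lt (g : Graph) (x y : vtx g) (r : R) : Prop :=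
  exists n, is_dist g x y n /\ INR n < r.
Definition dist_le (g : Graph) (x y : vtx g) (r : R) : Prop :=
  exists n, is_dist g x y n /\ INR n <= r.

Definition symmetric_graph (g : Graph) : Prop :=
  forall x y, adj g x y -> adj g y x.
Definition loopless (g : Graph) : Prop := forall x, ~ adj g x x.
Definition connected_graph (g : Graph) : Prop :=
  forall x y, exists n, walk_n g x y n.
Definition unbounded_graph (g : Graph) : Prop :=
  forall r : R, exists x y, dist_gt g x y r.

Definition rdisjoint (g : Graph) (r : R) (X Y : vtx g -> Prop) : Prop :=
  forall a b, X a -> Y b -> dist_gt g a b r.

Definition kconnected (g : Graph) (k : R) (X : vtx g -> Prop) : Prop :=
  forall a b, X a -> X b ->
    exists l, chain (fun u v => X v /\ dist_le g u v k) a l /\ last l a = b.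

Definition conn_set (g : Graph) (X : vtx g -> Prop) : Prop :=
  (exists x, X x) /\
  forall a b, X a -> X b ->
    exists l, chain (fun u v => adj g u v /\ X v) a l /\ last l a = b.

Definition nbhd (g : Graph) (r : R) (S : vtx g -> Prop) (y : vtx g) : Prop :=
  exists s, S s /\ dist_lt g s y r.

Definition path_between (g : Graph) (X Y : vtx g -> Prop) (p : list (vtx g)) : Prop :=
  match p with
  | nil => False
  | x :: l => chain (adj g) x l /\ X x /\ Y (last l x)
  end.

Definition inL {T : Type} (p : list T) : T -> Prop := fun z => In z p.

Definition bottlenecked (g : Graph) (M : R) (n : nat) : Prop :=
  forall X Y : vtx g -> Prop,
    conn_set g X -> conn_set g Y -> rdisjoint g M X Y ->
    exists S : list (vtx g),
      NoDup S /\ length S = n /\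
      (forall s, In s S -> ~ X s /\ ~ Y s) /\
      forall p, path_between g X Y p ->
        exists z, In z p /\ nbhd g M (inL S) z.

Definition coarsely_bottlenecked (g : Graph) : Prop :=
  exists (M : R) (n : nat), bottlenecked g M n.

(* H is an M-fat minor of G; H is a simple graph, the path for the edge uv is
   P u v, with P v u its reverse. *)
Definition fat_minor (G H : Graph) (M : R) : Prop :=
  exists (B : vtx H -> vtx G -> Prop) (P : vtx H -> vtx H -> list (vtx G)),
    (forall v, conn_set G (B v)) /\
    (forall u v, adj H u v ->
        P v u = rev (P u v) /\ path_between G (B u) (B v) (P u v)) /\
    (forall u w, u <> w -> rdisjoint G M (B u) (B w)) /\
    (forall u v u' v', adj H u v -> adj H u' v' ->
        ~ ((u = u' /\ v = v') \/ (u = v' /\ v = u')) ->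
        rdisjoint G M (inL (P u v)) (inL (P u' v'))) /\
    (forall w u v, adj H u v -> w <> u -> w <> v ->
        rdisjoint G M (B w) (inL (P u v))).

Definition layer (g : Graph) (x0 : vtx g) (lam : R) (N : Z) (x : vtx g) : Prop :=
  exists n, is_dist g x x0 n /\ IZR N * lam < INR n /\ INR n <= (IZR N + 1) * lam.

Definition is_block (g : Graph) (x0 : vtx g) (lam k : R) (B : vtx g -> Prop) : Prop :=
  (exists x, B x) /\
  exists N : Z,
    (forall x, B x -> layer g x0 lam N x) /\ kconnected g k B /\
    forall B' : vtx g -> Prop,
      (forall x, B' x -> layer g x0 lam N x) -> kconnected g k B' ->
      (forall x, B x -> B' x) -> forall x, B' x -> B x.

Definition skeleton (g : Graph) (x0 : vtx g) (lam k : R) : Graph :=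
  mkGraph {B : vtx g -> Prop | is_block g x0 lam k B}
    (fun b b' => proj1_sig b <> proj1_sig b' /\
       exists x y, proj1_sig b x /\ proj1_sig b' y /\ adj g x y).

From Stdlib Require Import Reals List ZArith Lia Lra Classical ClassicalEpsilon
  FunctionalExtensionality PropExtensionality ProofIrrelevance.
Import ListNotations.
Open Scope R_scope.

(* The blocks of the (2,2)-skeleton of a graph g are only 2-connected in g, but the middle
   vertex of a hop of length 2 is a neighbour of the block; so replacing every block by its
   1-neighbourhood turns the branch sets and paths of a minor of the skeleton into connected
   sets and paths of g.  Distances survive this thickening: a walk a ~ x ~ z of g meets at
   most two layers of width 2, and two points of one layer at distance <= 2 lie in the same
   block, so two steps in g advance at most one step in the skeleton.  Blocks at skeleton
   distance > M therefore have neighbourhoods at distance > 2M - 3 >= M + M/2 - 2.  Applied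
   to g = G_{lam,k}, only the symmetry of G is needed. *)

Section Chains.
Context {T : Type}.

Lemma last_cons (x y : T) (l : list T) : last (x :: l) y = last l x.
Proof.
  revert x y; induction l as [|z l IH]; intros x y; [reflexivity|].
  change (last (z :: l) y = last (z :: l) x). rewrite !IH. reflexivity.
Qed.

Lemma last_app (l1 l2 : list T) (x : T) : last (l1 ++ l2) x = last l2 (last l1 x).
Proof.
  revert x; induction l1 as [|y l1 IH]; intros x; [reflexivity|].
  rewrite <- app_comm_cons, !last_cons. apply IH.
Qed.

Lemma chain_app (E : T -> T -> Prop) x l1 l2 :
  chain E x (l1 ++ l2) <-> chain E x l1 /\ chain E (last l1 x) l2.
Proof.
  revert x; induction l1 as [|y l1 IH]; intros x; [simpl; tauto|].
  rewrite <- app_comm_cons, last_cons. simpl. rewrite IH. tauto.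
Qed.

Lemma chain_conj (E : T -> T -> Prop) (P : T -> Prop) x l :
  chain (fun u v => E u v /\ P v) x l <-> chain E x l /\ (forall z, In z l -> P z).
Proof.
  revert x; induction l as [|y l IH]; intros x; simpl; [tauto|].
  rewrite IH. split.
  - intros [[Hxy Py] [Hc Hl]]. split; [tauto|]. intros z [<-|Hz]; auto.
  - intros [[Hxy Hc] Hl]. auto.
Qed.

Definition reach (E : T -> T -> Prop) (a b : T) : Prop :=
  exists l, chain E a l /\ last l a = b.

Lemma reach_refl (E : T -> T -> Prop) a : reach E a a.
Proof. exists []; simpl; auto. Qed.

Lemma reach_step (E : T -> T -> Prop) a b : E a b -> reach E a b.
Proof. exists [b]; simpl; auto. Qed.

Lemma reach_trans (E : T -> T -> Prop) a b c : reach E a b -> reach E b c -> reach E a c.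
Proof.
  intros [l1 [H1 <-]] [l2 [H2 <-]]. exists (l1 ++ l2).
  rewrite chain_app, last_app. auto.
Qed.

Lemma reach_refine (E E' : T -> T -> Prop) (P : T -> Prop) a b :
  (forall u v, P u -> E u v -> P v /\ reach E' u v) -> P a -> reach E a b -> reach E' a b.
Proof.
  intros HE Pa [l [Hc <-]]. revert a Pa Hc.
  induction l as [|y l IH]; intros a Pa Hc; [apply reach_refl|].
  destruct Hc as [Hay Hc]. destruct (HE a y Pa Hay) as [Py Hr].
  rewrite last_cons. exact (reach_trans _ _ _ _ Hr (IH y Py Hc)).
Qed.

Lemma reach_mono (E E' : T -> T -> Prop) a b :
  (forall u v, E u v -> E' u v) -> reach E a b -> reach E' a b.
Proof.
  intros HE. apply reach_refine with (P := fun _ => True); [|exact I].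
  intros u v _ Huv. split; [exact I|]. apply reach_step, HE, Huv.
Qed.

Lemma reach_sym (E : T -> T -> Prop) a b :
  (forall u v, E u v -> E v u) -> reach E a b -> reach E b a.
Proof.
  intros HE [l [Hc <-]]. revert a Hc.
  induction l as [|y l IH]; intros a Hc; [apply reach_refl|].
  destruct Hc as [Hay Hc]. rewrite last_cons.
  apply reach_trans with y; [exact (IH y Hc)|]. apply reach_step, HE, Hay.
Qed.

End Chains.

Section Walks.
Variable g : Graph.

Lemma walk_n_refl x : walk_n g x x 0.
Proof. exists []; simpl; auto. Qed.

Lemma walk_n_adj x y : adj g x y -> walk_n g x y 1.
Proof. exists [y]; simpl; auto. Qed.

Lemma walk_n_app x y z n m : walk_n g x y n -> walk_n g y z m -> walk_n g x z (n + m).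
Proof.
  intros [l1 [H1 [<- <-]]] [l2 [H2 [<- <-]]]. exists (l1 ++ l2).
  rewrite chain_app, length_app, last_app. auto.
Qed.

Lemma walk_n_0_eq x y : walk_n g x y 0 -> x = y.
Proof. intros [[|z l] [_ [Hl E]]]; [exact E|discriminate]. Qed.

Lemma walk_n_S_inv x y n : walk_n g x y (S n) -> exists w, adj g x w /\ walk_n g w y n.
Proof.
  intros [[|w l] [Hc [Hl E]]]; [discriminate|].
  destruct Hc as [Hxw Hc]. rewrite last_cons in E. exists w. split; [exact Hxw|].
  exists l. injection Hl. auto.
Qed.

Lemma walk_n_eq_or_adj x y : x = y \/ adj g x y -> exists n, walk_n g x y n /\ (n <= 1)%nat.
Proof.
  intros [<-|Hxy]; [exists 0%nat; split; [apply walk_n_refl|lia]|].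
  exists 1%nat. split; [apply walk_n_adj, Hxy|lia].
Qed.

Lemma reach_adj_walk_n a b : reach (adj g) a b <-> exists n, walk_n g a b n.
Proof.
  split; [intros [l [Hc E]]; exists (length l), l; auto|].
  intros [n [l [Hc [_ E]]]]. exists l; auto.
Qed.

Lemma walk_n_is_dist x y m : walk_n g x y m -> exists n, is_dist g x y n /\ (n <= m)%nat.
Proof.
  induction m as [m IH] using (well_founded_induction lt_wf). intros Hw.
  destruct (classic (exists m', (m' < m)%nat /\ walk_n g x y m')) as [[m' [Hlt Hw']]|Hmin].
  - destruct (IH m' Hlt Hw') as [n [Hd Hle]]. exists n. split; [exact Hd|lia].
  - exists m. split; [split; [exact Hw|]|lia]. intros m' Hw'.
    destruct (Nat.lt_ge_cases m' m); [exfalso; eauto|assumption].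
Qed.

Lemma is_dist_unique x y n n' : is_dist g x y n -> is_dist g x y n' -> n = n'.
Proof. intros [Hw Hmin] [Hw' Hmin']. specialize (Hmin _ Hw'). specialize (Hmin' _ Hw). lia. Qed.

Lemma dist_le_of_walk_n x y n r : walk_n g x y n -> INR n <= r -> dist_le g x y r.
Proof.
  intros Hw Hr. destruct (walk_n_is_dist _ _ _ Hw) as [d [Hd Hle]].
  exists d. split; [exact Hd|]. apply le_INR in Hle. lra.
Qed.

Hypothesis Hsym : symmetric_graph g.

Lemma walk_n_sym x y n : walk_n g x y n -> walk_n g y x n.
Proof.
  revert x; induction n as [|n IH]; intros x Hw.
  - apply walk_n_0_eq in Hw as <-. apply walk_n_refl.
  - destruct (walk_n_S_inv _ _ _ Hw) as [w [Hxw Hw']].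
    rewrite <- Nat.add_1_r. apply walk_n_app with w; [exact (IH w Hw')|].
    apply walk_n_adj, Hsym, Hxw.
Qed.

Lemma is_dist_sym x y n : is_dist g x y n -> is_dist g y x n.
Proof.
  intros [Hw Hmin]. split; [apply walk_n_sym, Hw|].
  intros m Hm. apply Hmin, walk_n_sym, Hm.
Qed.

Lemma dist_le_sym x y r : dist_le g x y r -> dist_le g y x r.
Proof. intros [n [Hd Hr]]. exists n. split; [apply is_dist_sym, Hd|exact Hr]. Qed.

Lemma is_dist_adj_le r a x ra rx :
  adj g a x -> is_dist g a r ra -> is_dist g x r rx -> (rx <= S ra)%nat.
Proof.
  intros Hax [Wa _] [_ Hmin]. apply Hmin. rewrite <- Nat.add_1_l.
  apply walk_n_app with a; [apply walk_n_adj, Hsym, Hax|exact Wa].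
Qed.

Lemma path_between_rev X Y p : path_between g X Y p -> path_between g Y X (rev p).
Proof.
  destruct p as [|x l]; [contradiction|]. revert x X.
  induction l as [|y l IH]; intros x X [Hc [Xx Yl]]; [simpl; auto|].
  destruct Hc as [Hxy Hc]. rewrite last_cons in Yl.
  specialize (IH y (eq y) (conj Hc (conj eq_refl Yl))).
  change (rev (x :: y :: l)) with (rev (y :: l) ++ [x]).
  destruct (rev (y :: l)) as [|z m]; [contradiction|].
  destruct IH as [Hc' [Yz Hlast]]. simpl. rewrite chain_app, last_last, <- Hlast.
  simpl. auto.
Qed.

End Walks.

Lemma skeleton_symmetric g x0 lam k :
  symmetric_graph g -> symmetric_graph (skeleton g x0 lam k).
Proof.
  intros Hsym b b' [Hne [x [y [Hx [Hy Hxy]]]]].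
  split; [auto|]. exists y, x. auto.
Qed.

Lemma skeleton_vertex_eq g x0 lam k (b b' : vtx (skeleton g x0 lam k)) :
  proj1_sig b = proj1_sig b' -> b = b'.
Proof. apply eq_sig_hprop. intros; apply proof_irrelevance. Qed.

Section Layers.
Variables (g : Graph) (r0 : vtx g).

Lemma layer2_iff N x :
  layer g r0 2 N x <-> exists n, is_dist g x r0 n /\ (2 * N < Z.of_nat n <= 2 * N + 2)%Z.
Proof.
  unfold layer. split; intros [n [Hd Hr]]; exists n; split; auto.
  - rewrite INR_IZR_INZ in Hr. destruct Hr as [H1 H2].
    replace (IZR N * 2) with (IZR (2 * N)) in H1 by (rewrite mult_IZR; lra).
    replace ((IZR N + 1) * 2) with (IZR (2 * N + 2)) in H2
      by (rewrite plus_IZR, mult_IZR; lra).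
    apply lt_IZR in H1. apply le_IZR in H2. lia.
  - rewrite INR_IZR_INZ. destruct Hr as [H1 H2].
    apply IZR_lt in H1. apply IZR_le in H2.
    rewrite mult_IZR in H1. rewrite plus_IZR, mult_IZR in H2. lra.
Qed.

Lemma layer2_unique N N' x : layer g r0 2 N x -> layer g r0 2 N' x -> N = N'.
Proof.
  rewrite !layer2_iff. intros [n [Hd Hn]] [n' [Hd' Hn']].
  rewrite (is_dist_unique _ _ _ _ _ Hd Hd') in Hn. lia.
Qed.

Hypothesis Hsym : symmetric_graph g.

(* The distances to the root along a walk of length 2 span at most 3 consecutive
   values, which cannot meet three layers of width 2. *)
Lemma layers_of_two_step_walk a x z Na Nx Nz :
  adj g a x -> adj g x z ->
  layer g r0 2 Na a -> layer g r0 2 Nx x -> layer g r0 2 Nz z ->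
  Na = Nz \/ Nx = Na \/ Nx = Nz.
Proof.
  intros Hax Hxz La Lx Lz. apply layer2_iff in La, Lx, Lz.
  destruct La as [ra [Da Ra]], Lx as [rx [Dx Rx]], Lz as [rz [Dz Rz]].
  pose proof (is_dist_adj_le g Hsym r0 a x ra rx Hax Da Dx).
  pose proof (is_dist_adj_le g Hsym r0 x a rx ra (Hsym _ _ Hax) Dx Da).
  pose proof (is_dist_adj_le g Hsym r0 x z rx rz Hxz Dx Dz).
  pose proof (is_dist_adj_le g Hsym r0 z x rz rx (Hsym _ _ Hxz) Dz Dx).
  lia.
Qed.

End Layers.

Section TwoTwoSkeleton.
Variables (g : Graph) (r0 : vtx g).
Hypothesis Hsym : symmetric_graph g.
Local Notation Sk := (skeleton g r0 2 2).

Definition close_in (X : vtx g -> Prop) (u v : vtx g) : Prop :=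
  X u /\ X v /\ dist_le g u v 2.

Lemma close_in_sym X u v : close_in X u v -> close_in X v u.
Proof. intros [Xu [Xv Huv]]. repeat split; auto. apply dist_le_sym; auto. Qed.

Lemma kconnected2_iff X :
  kconnected g 2 X <-> forall a b, X a -> X b -> reach (close_in X) a b.
Proof.
  split; intros Hk a b Xa Xb.
  - apply reach_refine with (fun u v => X v /\ dist_le g u v 2) X; [|exact Xa|exact (Hk a b Xa Xb)].
    intros u v Xu [Xv Huv]. split; [exact Xv|]. apply reach_step. repeat split; auto.
  - apply reach_mono with (close_in X); [|exact (Hk a b Xa Xb)].
    intros u v [_ Huv]. exact Huv.
Qed.

(* B1 \/ B2 is 2-connected inside the layer of B1, so it is contained in B1 by maximality. *)
Lemma block_absorb (B1 B2 : vtx g -> Prop) a z N :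
  is_block g r0 2 2 B1 -> is_block g r0 2 2 B2 -> B1 a -> B2 z -> dist_le g a z 2 ->
  layer g r0 2 N a -> layer g r0 2 N z -> forall x, B2 x -> B1 x.
Proof.
  intros [_ [N1 [L1 [K1 Max1]]]] [_ [N2 [L2 [K2 _]]]] Ha Hz Haz La Lz.
  pose proof (layer2_unique _ _ _ _ _ (L1 a Ha) La) as <-.
  pose proof (layer2_unique _ _ _ _ _ (L2 z Hz) Lz) as <-.
  rewrite kconnected2_iff in K1, K2.
  set (U := fun x => B1 x \/ B2 x).
  assert (to_a : forall p, U p -> reach (close_in U) p a).
  { intros p [Hp|Hp].
    - apply reach_mono with (close_in B1); [|auto].
      intros u v [? [? ?]]. repeat split; unfold U; auto.
    - apply reach_trans with z.
      + apply reach_mono with (close_in B2); [|auto].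
        intros u v [? [? ?]]. repeat split; unfold U; auto.
      + apply reach_step. repeat split; unfold U; auto. apply dist_le_sym; auto. }
  intros x Hx. apply (Max1 U); [intros y [Hy|Hy]; auto| |intros y Hy; left; auto|right; auto].
  apply kconnected2_iff. intros p q Hp Hq. apply reach_trans with a; [auto|].
  apply reach_sym; [apply close_in_sym|auto].
Qed.

Lemma block_eq_of_close (b1 b2 : vtx Sk) a z N :
  proj1_sig b1 a -> proj1_sig b2 z -> dist_le g a z 2 ->
  layer g r0 2 N a -> layer g r0 2 N z -> b1 = b2.
Proof.
  intros Ha Hz Haz La Lz. apply skeleton_vertex_eq.
  apply functional_extensionality. intros x. apply propositional_extensionality. split.
  - exact (block_absorb _ _ z a N (proj2_sig b2) (proj2_sig b1) Hz Ha
             (dist_le_sym _ Hsym _ _ _ Haz) Lz La x).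
  - exact (block_absorb _ _ a z N (proj2_sig b1) (proj2_sig b2) Ha Hz Haz La Lz x).
Qed.

Lemma block_layer (b : vtx Sk) : exists N, forall x, proj1_sig b x -> layer g r0 2 N x.
Proof. destruct (proj2_sig b) as [_ [N [L _]]]. eauto. Qed.

Lemma layer_component_is_block N x :
  layer g r0 2 N x ->
  is_block g r0 2 2 (fun y => layer g r0 2 N y /\ reach (close_in (layer g r0 2 N)) x y).
Proof.
  intros Lx. set (L := layer g r0 2 N). set (C := fun y => L y /\ reach (close_in L) x y).
  split; [exists x; split; [exact Lx|apply reach_refl]|]. exists N. split; [|split].
  - intros y [Ly _]. exact Ly.
  - apply kconnected2_iff. intros a b [La Ha] [Lb Hb].
    apply reach_refine with (close_in L) C.
    + intros u v [Lu Hu] Huv. assert (Cv : C v).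
      { split; [apply Huv|]. apply reach_trans with u; [exact Hu|apply reach_step, Huv]. }
      split; [exact Cv|]. apply reach_step.
      split; [split; assumption|split; [exact Cv|apply Huv]].
    + split; assumption.
    + apply reach_trans with x; [|exact Hb]. apply reach_sym; [apply close_in_sym|exact Ha].
  - intros B' HL HK HCB y Hy. split; [apply HL, Hy|].
    apply reach_mono with (close_in B').
    + intros u v [Hu [Hv Huv]]. repeat split; auto; apply HL; assumption.
    + apply kconnected2_iff; [exact HK| |exact Hy].
      apply HCB. split; [exact Lx|apply reach_refl].
Qed.

(* The walk to a block only serves to put x at finite distance from the root. *)
Lemma exists_block_of_walk (b : vtx Sk) x c n :
  walk_n g x c n -> proj1_sig b c -> exists b' : vtx Sk, proj1_sig b' x.
Proof.
  intros Hxc Hc. destruct (block_layer b) as [Nc Lc].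
  destruct (proj1 (layer2_iff _ _ _ _) (Lc c Hc)) as [rc [[Wc _] _]].
  destruct (walk_n_is_dist g x r0 _ (walk_n_app g _ _ _ _ _ Hxc Wc)) as [r [Dx _]].
  set (N := ((Z.of_nat r + 1) / 2 - 1)%Z).
  assert (Lx : layer g r0 2 N x).
  { apply layer2_iff. exists r. split; [exact Dx|]. unfold N.
    Z.to_euclidean_division_equations; lia. }
  exists (exist _ _ (layer_component_is_block N x Lx)). split; [exact Lx|apply reach_refl].
Qed.

Lemma skeleton_close_of_adj (b1 b2 : vtx Sk) a x :
  proj1_sig b1 a -> proj1_sig b2 x -> adj g a x -> b1 = b2 \/ adj Sk b1 b2.
Proof.
  intros Ha Hx Hax. destruct (classic (proj1_sig b1 = proj1_sig b2)) as [E|E].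
  - left. apply skeleton_vertex_eq, E.
  - right. split; [exact E|]. exists a, x. auto.
Qed.

Lemma skeleton_close_of_two_steps (b1 b2 : vtx Sk) a x z :
  proj1_sig b1 a -> proj1_sig b2 z -> adj g a x -> adj g x z -> b1 = b2 \/ adj Sk b1 b2.
Proof.
  intros Ha Hz Hax Hxz.
  destruct (block_layer b1) as [Na La], (block_layer b2) as [Nz Lz].
  destruct (exists_block_of_walk b2 x z 1 (walk_n_adj g _ _ Hxz) Hz) as [bx Hx].
  destruct (block_layer bx) as [Nx Lx].
  destruct (layers_of_two_step_walk g r0 Hsym a x z Na Nx Nz Hax Hxz
              (La a Ha) (Lx x Hx) (Lz z Hz))
    as [ <- | [ -> | -> ]].
  - left. apply (block_eq_of_close b1 b2 a z Na Ha Hz); [|apply La, Ha|apply Lz, Hz].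
    apply dist_le_of_walk_n with 2%nat; [|simpl; lra].
    exact (walk_n_app g _ _ _ 1 1 (walk_n_adj g _ _ Hax) (walk_n_adj g _ _ Hxz)).
  - assert (E : bx = b1).
    { apply (block_eq_of_close bx b1 x a Na Hx Ha); [|apply Lx, Hx|apply La, Ha].
      apply dist_le_of_walk_n with 1%nat; [apply walk_n_adj, Hsym, Hax|simpl; lra]. }
    subst bx. apply (skeleton_close_of_adj b1 b2 x z Hx Hz Hxz).
  - assert (E : bx = b2).
    { apply (block_eq_of_close bx b2 x z Nz Hx Hz); [|apply Lx, Hx|apply Lz, Hz].
      apply dist_le_of_walk_n with 1%nat; [apply walk_n_adj, Hxz|simpl; lra]. }
    subst bx. apply (skeleton_close_of_adj b1 b2 a x Ha Hx Hax).
Qed.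

Lemma skeleton_walk_of_walk m : forall a c (b1 b2 : vtx Sk),
  walk_n g a c m -> proj1_sig b1 a -> proj1_sig b2 c ->
  exists n, walk_n Sk b1 b2 n /\ (2 * n <= m + 1)%nat.
Proof.
  induction m as [m IH] using (well_founded_induction lt_wf).
  intros a c b1 b2 Hw Ha Hc. destruct m as [|[|m]].
  - apply walk_n_0_eq in Hw as <-. destruct (block_layer b1) as [N LN].
    assert (E : b1 = b2).
    { apply (block_eq_of_close b1 b2 a a N Ha Hc); [|apply LN, Ha|apply LN, Ha].
      apply dist_le_of_walk_n with 0%nat; [apply walk_n_refl|simpl; lra]. }
    subst b2. exists 0%nat. split; [apply walk_n_refl|lia].
  - apply walk_n_S_inv in Hw as [w [Haw Hw]]. apply walk_n_0_eq in Hw as <-.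
    destruct (walk_n_eq_or_adj Sk b1 b2 (skeleton_close_of_adj b1 b2 a w Ha Hc Haw))
      as [n [Hn Hle]].
    exists n. split; [exact Hn|lia].
  - apply walk_n_S_inv in Hw as [x1 [Hax1 Hw]]. apply walk_n_S_inv in Hw as [x2 [Hx12 Hw]].
    destruct (exists_block_of_walk b2 x2 c m Hw Hc) as [b Hx2].
    destruct (walk_n_eq_or_adj Sk b1 b
                (skeleton_close_of_two_steps b1 b a x1 x2 Ha Hx2 Hax1 Hx12))
      as [n0 [W0 Le0]].
    destruct (IH m ltac:(lia) x2 c b b2 Hw Hx2 Hc) as [n1 [W1 Le1]].
    exists (n0 + n1)%nat. split; [apply walk_n_app with b; assumption|lia].
Qed.

Definition near (X : vtx Sk -> Prop) (x : vtx g) : Prop :=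
  exists (b : vtx Sk) y, X b /\ proj1_sig b y /\ (y = x \/ adj g y x).

Lemma near_mono (X Y : vtx Sk -> Prop) x : (forall b, X b -> Y b) -> near X x -> near Y x.
Proof. intros HXY [b [y [Xb Hy]]]. exists b, y. auto. Qed.

Lemma reach_near_of_close X (b : vtx Sk) u v :
  X b -> proj1_sig b u -> proj1_sig b v -> dist_le g u v 2 ->
  reach (fun p q => adj g p q /\ near X q) u v.
Proof.
  intros Xb Hu Hv [n [[[l [Hc [Hlen Hlast]]] _] Hn]].
  assert (n <= 2)%nat by (apply INR_le; simpl; lra).
  exists l. split; [|exact Hlast]. apply chain_conj. split; [exact Hc|].
  (* the only inner vertex of a walk of length 2 is a neighbour of u *)
  destruct l as [|w1 [|w2 [|w3 l]]]; simpl in *; subst; try lia; try contradiction.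
  - intros z [<-|[]]. exists b, v. auto.
  - intros z [<-|[<-|[]]]; [exists b, u|exists b, v]; tauto.
Qed.

Lemma reach_near_in_block X (b : vtx Sk) p q :
  X b -> proj1_sig b p -> proj1_sig b q -> reach (fun u v => adj g u v /\ near X v) p q.
Proof.
  intros Xb Hp Hq. destruct (proj2_sig b) as [_ [_ [_ [Hk _]]]].
  apply reach_refine with (close_in (proj1_sig b)) (fun _ => True); [|exact I|].
  - intros u v _ [Hu [Hv Huv]]. split; [exact I|]. exact (reach_near_of_close X b u v Xb Hu Hv Huv).
  - apply kconnected2_iff; assumption.
Qed.

Lemma reach_lift X (b0 b1 : vtx Sk) a c :
  reach (fun u v => adj Sk u v /\ X v) b0 b1 -> X b0 -> proj1_sig b0 a -> proj1_sig b1 c ->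
  reach (fun u v => adj g u v /\ near X v) a c.
Proof.
  intros [l [Hc <-]]. revert b0 a Hc.
  induction l as [|b l IH]; intros b0 a Hc Xb0 Ha Hlast;
    [exact (reach_near_in_block X b0 a c Xb0 Ha Hlast)|].
  destruct Hc as [[[_ [x [y [Hx [Hy Hxy]]]]] Xb] Hc]. rewrite last_cons in Hlast.
  apply reach_trans with x; [exact (reach_near_in_block X b0 a x Xb0 Ha Hx)|].
  apply reach_trans with y; [|exact (IH b y Hc Xb Hy Hlast)].
  apply reach_step. split; [exact Hxy|]. exists b, y. auto.
Qed.

Lemma walk_n_of_skeleton_walk (b1 b2 : vtx Sk) a c n :
  walk_n Sk b1 b2 n -> proj1_sig b1 a -> proj1_sig b2 c -> exists m, walk_n g a c m.
Proof.
  intros Hw Ha Hc. apply reach_adj_walk_n.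
  apply reach_mono with (fun u v => adj g u v /\ near (fun _ => True) v); [tauto|].
  apply reach_lift with b1 b2; [|exact I|exact Ha|exact Hc].
  apply reach_mono with (adj Sk); [tauto|]. apply reach_adj_walk_n. eauto.
Qed.

(* A path of length n0 between the neighbourhoods of two blocks at skeleton distance nd
   extends to a walk of length at most n0 + 2 between the blocks, so 2 nd <= n0 + 3. *)
Lemma near_rdisjoint (M : R) X Y :
  2 <= M -> rdisjoint Sk M X Y -> rdisjoint g (M + M / 2 - 2) (near X) (near Y).
Proof.
  intros HM HXY a' c' [b1 [a [Xb1 [Ha Ea]]]] [b2 [c [Yb2 [Hc Ec]]]].
  destruct (HXY b1 b2 Xb1 Yb2) as [nd [[Wd Hmin] Hnd]].
  destruct (walk_n_eq_or_adj g a a' Ea) as [e1 [W1 Le1]].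
  destruct (walk_n_eq_or_adj g c c' Ec) as [e2 [W2 Le2]].
  destruct (walk_n_of_skeleton_walk b1 b2 a c nd Wd Ha Hc) as [m Wac].
  destruct (walk_n_is_dist g a' c' _ (walk_n_app g _ _ _ _ _ (walk_n_sym g Hsym _ _ _ W1)
              (walk_n_app g _ _ _ _ _ Wac W2))) as [n0 [Dn0 _]].
  exists n0. split; [exact Dn0|].
  assert (Wac' : walk_n g a c (e1 + (n0 + e2))).
  { apply walk_n_app with a'; [exact W1|]. apply walk_n_app with c'; [apply Dn0|].
    apply walk_n_sym; assumption. }
  destruct (skeleton_walk_of_walk _ a c b1 b2 Wac' Ha Hc) as [n [Wn Hn]].
  pose proof (Hmin n Wn) as Hnd_n.
  assert (Hi : (2 * nd <= n0 + 3)%nat) by lia.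
  apply le_INR in Hi. rewrite mult_INR, plus_INR in Hi. simpl in Hi. lra.
Qed.

Lemma near_conn_set X : conn_set Sk X -> conn_set g (near X).
Proof.
  intros [[b Xb] HX]. split.
  - destruct (proj2_sig b) as [[x Hx] _]. exists x, b, x. auto.
  - intros a c [b1 [y1 [Xb1 [Hy1 Ea]]]] [b3 [y3 [Xb3 [Hy3 Ec]]]].
    change (reach (fun u v => adj g u v /\ near X v) a c).
    apply reach_trans with y1.
    { destruct Ea as [<-|Ea]; [apply reach_refl|]. apply reach_step.
      split; [apply Hsym, Ea|]. exists b1, y1. auto. }
    apply reach_trans with y3; [exact (reach_lift X b1 b3 y1 y3 (HX b1 b3 Xb1 Xb3) Xb1 Hy1 Hy3)|].
    destruct Ec as [<-|Ec]; [apply reach_refl|]. apply reach_step.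
    split; [exact Ec|]. exists b3, y3. auto.
Qed.

Lemma path_lift X Y p : path_between Sk X Y p ->
  exists q, path_between g (near X) (near Y) q /\ forall z, In z q -> near (inL p) z.
Proof.
  destruct p as [|b0 l]; [contradiction|]. intros [Hc [Xb0 Yl]].
  destruct (proj2_sig b0) as [[a Ha] _], (proj2_sig (last l b0)) as [[c Hc'] _].
  assert (Hreach : reach (fun u v => adj Sk u v /\ inL (b0 :: l) v) b0 (last l b0)).
  { exists l. split; [|reflexivity]. apply chain_conj. split; [exact Hc|].
    intros z Hz. right. exact Hz. }
  destruct (reach_lift _ _ _ a c Hreach (or_introl eq_refl) Ha Hc') as [l' [Hl' Hlast]].
  apply chain_conj in Hl' as [Hadj Hnear].
  exists (a :: l'). split.
  - split; [exact Hadj|]. split; [exists b0, a; auto|]. rewrite Hlast. exists (last l b0), c. auto.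
  - intros z [<-|Hz]; [exists b0, a; split; [left|]; auto|auto].
Qed.

End TwoTwoSkeleton.

(* Orient each unordered pair {u, v} by a choice of one of (u, v), (v, u) that does not
   depend on the order in which the pair is given. *)
Lemma symmetric_choice {V A : Type} (Q : V -> V -> list A) :
  exists P : V -> V -> list A, forall u v, u <> v ->
    P v u = rev (P u v) /\ (P u v = Q u v \/ P u v = rev (Q v u)).
Proof.
  set (pick u v := epsilon (inhabits (u, v)) (fun e : V * V => e = (u, v) \/ e = (v, u))).
  assert (pick_sym : forall u v, pick u v = pick v u).
  { intros u v. unfold pick. rewrite (epsilon_inh_irrelevance (inhabits (u, v)) (inhabits (v, u)));
      [|eauto]. f_equal.
    apply functional_extensionality. intros e. apply propositional_extensionality. tauto. }
  assert (pick_spec : forall u v, pick u v = (u, v) \/ pick u v = (v, u)).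
  { intros u v. apply epsilon_spec. eauto. }
  exists (fun u v =>
    if excluded_middle_informative (pick u v = (u, v)) then Q u v else rev (Q v u)).
  intros u v Huv. rewrite (pick_sym v u).
  destruct (excluded_middle_informative (pick u v = (u, v))) as [E|E];
    destruct (excluded_middle_informative (pick u v = (v, u))) as [E'|E'].
  - rewrite E in E'. injection E' as ->. contradiction.
  - auto.
  - rewrite rev_involutive. auto.
  - destruct (pick_spec u v); contradiction.
Qed.

Lemma rdisjoint_mono g r (X Y X' Y' : vtx g -> Prop) :
  rdisjoint g r X Y -> (forall z, X' z -> X z) -> (forall z, Y' z -> Y z) -> rdisjoint g r X' Y'.
Proof. intros HXY HX HY a b Ha Hb. apply HXY; auto. Qed.

Lemma lift_edge_paths g r0 (H : Graph) (B : vtx H -> vtx (skeleton g r0 2 2) -> Prop)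
    (P2 : vtx H -> vtx H -> list (vtx (skeleton g r0 2 2))) :
  symmetric_graph g -> symmetric_graph H -> loopless H ->
  (forall u v, adj H u v -> P2 v u = rev (P2 u v) /\ path_between _ (B u) (B v) (P2 u v)) ->
  exists P : vtx H -> vtx H -> list (vtx g), forall u v, adj H u v ->
    P v u = rev (P u v) /\ path_between g (near g r0 (B u)) (near g r0 (B v)) (P u v) /\
    forall z, In z (P u v) -> near g r0 (inL (P2 u v)) z.
Proof.
  intros Hsym HsymH HloopH HP2.
  destruct (choice (fun (e : vtx H * vtx H) q => adj H (fst e) (snd e) ->
      path_between g (near g r0 (B (fst e))) (near g r0 (B (snd e))) q /\
      forall z, In z q -> near g r0 (inL (P2 (fst e) (snd e))) z)) as [Q HQ].
  { intros [u v]. destruct (classic (adj H u v)) as [Huv|Huv]; [|exists []; contradiction].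
    destruct (path_lift g r0 _ _ _ (proj2 (HP2 u v Huv))) as [q Hq]. exists q. auto. }
  destruct (symmetric_choice (fun u v => Q (u, v))) as [P HP].
  exists P. intros u v Huv.
  assert (Hne : u <> v) by (intros ->; exact (HloopH v Huv)).
  destruct (HP u v Hne) as [Hrev Hchoice]. split; [exact Hrev|].
  destruct Hchoice as [-> | ->]; [exact (HQ (u, v) Huv)|].
  destruct (HQ (v, u) (HsymH u v Huv)) as [Hpath Hnear]. simpl in Hpath, Hnear. split.
  - apply path_between_rev; assumption.
  - intros z Hz. apply in_rev in Hz. apply near_mono with (inL (P2 v u)); [|auto].
    intros b. unfold inL. rewrite (proj1 (HP2 u v Huv)). apply in_rev.
Qed.

Theorem fat_minor_lift g r0 (H : Graph) (M : R) :
  symmetric_graph g -> symmetric_graph H -> loopless H -> 2 <= M ->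
  fat_minor (skeleton g r0 2 2) H M -> fat_minor g H (M + M / 2 - 2).
Proof.
  intros Hsym HsymH HloopH HM [B [P2 [HB [HP2 [HBB [HPP HBP]]]]]].
  destruct (lift_edge_paths g r0 H B P2 Hsym HsymH HloopH HP2) as [P HP].
  exists (fun v => near g r0 (B v)), P. split; [|split; [|split; [|split]]].
  - intros v. apply near_conn_set; auto.
  - intros u v Huv. destruct (HP u v Huv) as [? [? _]]. auto.
  - intros u w Huw. apply near_rdisjoint; auto.
  - intros u v u' v' Huv Hu'v' Hne.
    apply rdisjoint_mono with (near g r0 (inL (P2 u v))) (near g r0 (inL (P2 u' v'))).
    + apply near_rdisjoint; auto.
    + apply HP, Huv.
    + apply HP, Hu'v'.
  - intros w u v Huv Hwu Hwv.
    apply rdisjoint_mono with (near g r0 (B w)) (near g r0 (inL (P2 u v))).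
    + apply near_rdisjoint; auto.
    + auto.
    + apply HP, Huv.
Qed.

Theorem lemma7 (G : Graph) (x0 : vtx G) (lam k : R) (H : Graph) (M : R)
  (r0 : vtx (skeleton G x0 lam k)) :
  symmetric_graph G -> loopless G -> connected_graph G -> unbounded_graph G ->
  symmetric_graph H -> loopless H ->
  1 <= lam -> 1 <= k -> 4 <= M ->
  proj1_sig r0 x0 ->
  coarsely_bottlenecked G ->
  fat_minor (skeleton (skeleton G x0 lam k) r0 2 2) H M ->
  fat_minor (skeleton G x0 lam k) H (M + M / 2 - 2).
Proof.
  intros HsymG _ _ _ HsymH HloopH _ _ HM _ _.
  apply fat_minor_lift; [apply skeleton_symmetric, HsymG|exact HsymH|exact HloopH|lra].
Qed.
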